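(* Let $\mathbb A_V=(A,V,\psi_V^A,\sigma_V^A)$ and $\mathbb A_W=(A,W,\psi_W^A,\sigma_W^A)$ be two quadruples (with the same monoid $A$), each satisfying the twisted condition and the cocycle condition, and suppose there exist a link morphism $\Delta_{V\otimes W}:V\otimes W\to V\otimes W$ and a twisting morphism $\tau_W^V:W\otimes V\to V\otimes W$ between them. Define $$\sigma_{V\otimes W}^A=(\mu_A\otimes V\otimes W)\circ(A\otimes\psi_V^A\otimes W)\circ(\sigma_V^A\otimes\sigma_W^A)\circ(V\otimes\tau_W^V\otimes W):V\otimes W\otimes V\otimes W\to A\otimes V\otimes W,$$ and assume $\sigma_{V\otimes W}^A=\sigma_{V\otimes W}^A\circ(\Delta_{V\otimes W}\otimes V\otimes W)$, $\sigma_{V\otimes W}^A=\sigma_{V\otimes W}^A\circ(V\otimes W\otimes\Delta_{V\otimes W})$ and $\sigma_{V\otimes W}^A=(A\otimes\Delta_{V\otimes W})\circ\sigma_{V\otimes W}^A$. Then the quadruple $\mathbb A_{V\otimes W}=(A,V\otimes W,\psi_{V\otimes W}^A,\sigma_{V\otimes W}^A)$ satisfies the twisted condition, the cocycle condition and $\nabla_{A\otimes V\otimes W}\circ\sigma_{V\otimes W}^A=\sigma_{V\otimes W}^A$. Consequently $(A\otimes V\otimes W,\mu_{A\otimes V\otimes W})$ is a weak crossed product, where $$\mu_{A\otimes V\otimes W}=(\mu_A\otimes V\otimes W)\circ(\mu_A\otimes\sigma_{V\otimes W}^A)\circ(A\otimes\psi_{V\otimes W}^A\otimes V\otimes W).$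$
   Context: $\mathcal C$ is a strict monoidal category with tensor product $\otimes$ and unit object $K$, in which every idempotent morphism splits; for an object $X$ and a morphism $f$, $X\otimes f$ means $id_X\otimes f$ and $f\otimes X$ means $f\otimes id_X$. A monoid $(A,\eta_A,\mu_A)$ is an object with unit and associative unital product. A quadruple $\mathbb A_V=(A,V,\psi_V^A,\sigma_V^A)$ consists of a monoid $A$, an object $V$, and morphisms $\psi_V^A:V\otimes A\to A\otimes V$, $\sigma_V^A:V\otimes V\to A\otimes V$ such that $(\mu_A\otimes V)\circ(A\otimes\psi_V^A)\circ(\psi_V^A\otimes A)=\psi_V^A\circ(V\otimes\mu_A)$; put $\nabla_{A\otimes V}=(\mu_A\otimes V)\circ(A\otimes\psi_V^A)\circ(A\otimes V\otimes\eta_A)$ (an idempotent), and it is a standing assumption that $\nabla_{A\otimes V}\circ\sigma_V^A=\sigma_V^A$. Twisted condition: $(\mu_A\otimes V)\circ(A\otimes\psi_V^A)\circ(\sigma_V^A\otimes A)=(\mu_A\otimes V)\circ(A\otimes\sigma_V^A)\circ(\psi_V^A\otimes V)\circ(V\otimes\psi_V^A)$. Cocycle condition: $(\mu_A\otimes V)\circ(A\otimes\sigma_V^A)\circ(\sigma_V^A\otimes V)=(\mu_A\otimes V)\circ(A\otimes\sigma_V^A)\circ(\psi_V^A\otimes V)\circ(V\otimes\sigma_V^A)$. If both hold, $(A\otimes V,\mu_{A\otimes V})$ with $\mu_{A\otimes V}=(\mu_A\otimes V)\circ(\mu_A\otimes\sigma_V^A)\circ(A\otimes\psi_V^A\otimes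 V)$ is called a weak crossed product (this product is then associative). Link morphism: given quadruples $\mathbb A_V,\mathbb A_W$ and $\Delta_{V\otimes W}:V\otimes W\to V\otimes W$, put $\psi_{V\otimes W}^A=(\psi_V^A\otimes W)\circ(V\otimes\psi_W^A)\circ(\Delta_{V\otimes W}\otimes A)$ and $\nabla_{A\otimes V\otimes W}=(\mu_A\otimes V\otimes W)\circ(A\otimes\psi_{V\otimes W}^A)\circ(A\otimes V\otimes W\otimes\eta_A)$; $\Delta_{V\otimes W}$ is a link morphism if $\psi_{V\otimes W}^A=(A\otimes\Delta_{V\otimes W})\circ\psi_{V\otimes W}^A$ and $\psi_{V\otimes W}^A=\nabla_{A\otimes V\otimes W}\circ(\psi_V^A\otimes W)\circ(V\otimes\psi_W^A)$. Twisting morphism: $\tau_W^V:W\otimes V\to V\otimes W$ such that (i) $(\psi_V^A\otimes W)\circ(V\otimes\psi_W^A)\circ(\tau_W^V\otimes A)=(A\otimes\tau_W^V)\circ(\psi_W^A\otimes V)\circ(W\otimes\psi_V^A)$; (ii) $(\mu_A\otimes V\otimes W)\circ(A\otimes\sigma_V^A\otimes W)\circ(\psi_V^A\otimes\tau_W^V)\circ(V\otimes\sigma_W^A\otimes V)\circ(\tau_W^V\otimes W\otimes V)=(\mu_A\otimes V\otimes W)\circ(A\otimes\psi_V^A\otimes W)\circ(A\otimes V\otimes\sigma_W^A)\circ(A\otimes\tau_W^V\otimes W)\circ(\psi_W^A\otimes V\otimes W)\circ(W\otimes\sigma_V^A\otimes W)\circ(W\otimes V\otimes\tau_W^V)$.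 The twisted and cocycle conditions for $\mathbb A_{V\otimes W}$ are the same formulas with $V$ replaced by $V\otimes W$. *)

(* A strict monoidal category is presented in the standard single-sorted
   ("arrows-only") way: a type of objects, a type of morphisms, domain and
   codomain maps, identities, a (total) composition whose behaviour is only
   constrained on composable pairs, and a tensor product on objects and on
   morphisms that is strictly associative and strictly unital. *)

Record SMCat := {
  Ob : Type;
  Mor : Type;
  dom : Mor -> Ob;
  cod : Mor -> Ob;
  idm : Ob -> Mor;
  comp : Mor -> Mor -> Mor;
  otens : Ob -> Ob -> Ob;
  mtens : Mor -> Mor -> Mor;
  unitob : Ob;
  dom_idm : forall X, dom (idm X) = X;
  cod_idm : forall X, cod (idm X) = X;
  dom_comp : forall g f, cod f = dom g -> dom (comp g f) = dom f;
  cod_comp : forall g f, cod f = dom g -> cod (comp g f) = cod g;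
  comp_idm_r : forall f, comp f (idm (dom f)) = f;
  comp_idm_l : forall f, comp (idm (cod f)) f = f;
  comp_assoc : forall h g f, cod f = dom g -> cod g = dom h ->
      comp h (comp g f) = comp (comp h g) f;
  dom_mtens : forall f g, dom (mtens f g) = otens (dom f) (dom g);
  cod_mtens : forall f g, cod (mtens f g) = otens (cod f) (cod g);
  mtens_idm : forall X Y, mtens (idm X) (idm Y) = idm (otens X Y);
  mtens_comp : forall g1 f1 g2 f2, cod f1 = dom g1 -> cod f2 = dom g2 ->
      mtens (comp g1 f1) (comp g2 f2) = comp (mtens g1 g2) (mtens f1 f2);
  otens_assoc : forall X Y Z, otens (otens X Y) Z = otens X (otens Y Z);
  otens_unit_l : forall X, otens unitob X = X;
  otens_unit_r : forall X, otens X unitob = X;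
  mtens_assoc : forall f g h, mtens (mtens f g) h = mtens f (mtens g h);
  mtens_unit_l : forall f, mtens (idm unitob) f = f;
  mtens_unit_r : forall f, mtens f (idm unitob) = f
}.

Arguments Ob {_}.
Arguments Mor {_}.
Arguments dom {_} _.
Arguments cod {_} _.
Arguments idm {_} _.
Arguments comp {_} _ _.
Arguments otens {_} _ _.
Arguments mtens {_} _ _.
Arguments unitob {_}.

Declare Scope smc_scope.
Open Scope smc_scope.
Notation "g ∘ f" := (comp g f) (at level 40, left associativity) : smc_scope.
Notation "f ⊗ g" := (mtens f g) (at level 34, left associativity) : smc_scope.
Notation "X ⊠ Y" := (otens X Y) (at level 34, left associativity) : smc_scope.

Definition idempotents_split (C : SMCat) : Prop :=
  forall e : @Mor C, dom e = cod e -> e ∘ e = e ->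
    exists (X : @Ob C) (p i : @Mor C),
      dom p = dom e /\ cod p = X /\ dom i = X /\ cod i = cod e /\
      i ∘ p = e /\ p ∘ i = idm X.

Section Defs.
Context {C : SMCat}.

Definition is_monoid (A : @Ob C) (eta mu : @Mor C) : Prop :=
  dom eta = unitob /\ cod eta = A /\ dom mu = A ⊠ A /\ cod mu = A /\
  mu ∘ (mu ⊗ idm A) = mu ∘ (idm A ⊗ mu) /\
  mu ∘ (eta ⊗ idm A) = idm A /\
  mu ∘ (idm A ⊗ eta) = idm A.

(* A quadruple (A, V, psi, sigma) over the monoid (A, eta, mu) (without the
   standing assumption nabla o sigma = sigma, which is stated separately). *)
Definition is_quadruple (A : @Ob C) (eta mu : @Mor C) (V : @Ob C) (psi sigma : @Mor C) : Prop :=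
  is_monoid A eta mu /\
  dom psi = V ⊠ A /\ cod psi = A ⊠ V /\
  dom sigma = V ⊠ V /\ cod sigma = A ⊠ V /\
  (mu ⊗ idm V) ∘ (idm A ⊗ psi) ∘ (psi ⊗ idm A) = psi ∘ (idm V ⊗ mu).

Definition nabla (A : @Ob C) (eta mu : @Mor C) (V : @Ob C) (psi : @Mor C) : @Mor C :=
  (mu ⊗ idm V) ∘ (idm A ⊗ psi) ∘ (idm A ⊗ idm V ⊗ eta).

Definition twisted_cond (A : @Ob C) (mu : @Mor C) (V : @Ob C) (psi sigma : @Mor C) : Prop :=
  (mu ⊗ idm V) ∘ (idm A ⊗ psi) ∘ (sigma ⊗ idm A)
  = (mu ⊗ idm V) ∘ (idm A ⊗ sigma) ∘ (psi ⊗ idm V) ∘ (idm V ⊗ psi).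

Definition cocycle_cond (A : @Ob C) (mu : @Mor C) (V : @Ob C) (psi sigma : @Mor C) : Prop :=
  (mu ⊗ idm V) ∘ (idm A ⊗ sigma) ∘ (sigma ⊗ idm V)
  = (mu ⊗ idm V) ∘ (idm A ⊗ sigma) ∘ (psi ⊗ idm V) ∘ (idm V ⊗ sigma).

Definition wcp_product (A : @Ob C) (mu : @Mor C) (V : @Ob C) (psi sigma : @Mor C) : @Mor C :=
  (mu ⊗ idm V) ∘ (mu ⊗ sigma) ∘ (idm A ⊗ psi ⊗ idm V).

(* (A ⊗ V, mu_{A⊗V}) is a weak crossed product: by definition, the twisted and
   cocycle conditions hold (mu_{A⊗V} is then the product above). *)
Definition weak_crossed_product (A : @Ob C) (mu : @Mor C) (V : @Ob C) (psi sigma : @Mor C) : Prop :=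
  twisted_cond A mu V psi sigma /\ cocycle_cond A mu V psi sigma.

Definition psi_tens (A V W : @Ob C) (psiV psiW Delta : @Mor C) : @Mor C :=
  (psiV ⊗ idm W) ∘ (idm V ⊗ psiW) ∘ (Delta ⊗ idm A).

Definition is_link_morphism (A : @Ob C) (eta mu : @Mor C) (V W : @Ob C)
    (psiV psiW Delta : @Mor C) : Prop :=
  dom Delta = V ⊠ W /\ cod Delta = V ⊠ W /\
  psi_tens A V W psiV psiW Delta
    = (idm A ⊗ Delta) ∘ psi_tens A V W psiV psiW Delta /\
  psi_tens A V W psiV psiW Delta
    = nabla A eta mu (V ⊠ W) (psi_tens A V W psiV psiW Delta)
      ∘ (psiV ⊗ idm W) ∘ (idm V ⊗ psiW).

Definition is_twisting_morphism (A : @Ob C) (mu : @Mor C) (V W : @Ob C)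
    (psiV sigmaV psiW sigmaW tau : @Mor C) : Prop :=
  dom tau = W ⊠ V /\ cod tau = V ⊠ W /\
  (psiV ⊗ idm W) ∘ (idm V ⊗ psiW) ∘ (tau ⊗ idm A)
    = (idm A ⊗ tau) ∘ (psiW ⊗ idm V) ∘ (idm W ⊗ psiV) /\
  (mu ⊗ idm V ⊗ idm W) ∘ (idm A ⊗ sigmaV ⊗ idm W) ∘ (psiV ⊗ tau)
    ∘ (idm V ⊗ sigmaW ⊗ idm V) ∘ (tau ⊗ idm W ⊗ idm V)
  = (mu ⊗ idm V ⊗ idm W) ∘ (idm A ⊗ psiV ⊗ idm W) ∘ (idm A ⊗ idm V ⊗ sigmaW)
    ∘ (idm A ⊗ tau ⊗ idm W) ∘ (psiW ⊗ idm V ⊗ idm W)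
    ∘ (idm W ⊗ sigmaV ⊗ idm W) ∘ (idm W ⊗ idm V ⊗ tau).

Definition sigma_tens (A : @Ob C) (mu : @Mor C) (V W : @Ob C)
    (psiV sigmaV sigmaW tau : @Mor C) : @Mor C :=
  (mu ⊗ idm V ⊗ idm W) ∘ (idm A ⊗ psiV ⊗ idm W) ∘ (sigmaV ⊗ sigmaW)
    ∘ (idm V ⊗ tau ⊗ idm W).

End Defs.

(* Every hypothesis and every identity to be proved is an equation between composites of
   morphisms id ⊗ f ⊗ id, with f among mu, eta, psi_V, sigma_V, psi_W, sigma_W, tau and Delta.
   Recording such a composite as a list of layers, the interchange law lets adjacent layers
   on disjoint wires slide past each other, and any hypothesis can be applied to a block of
   consecutive layers in an arbitrary tensor context.  The twisted, cocycle and nabla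
   identities for V ⊗ W then become finite chains of such moves: the Delta inside
   psi_{V ⊗ W} is carried next to sigma_{V ⊗ W}, where the three hypotheses on
   sigma_{V ⊗ W} absorb it, and what remains follows from the associativity of mu, the
   compatibility of psi_V and psi_W with mu, the twisted and cocycle conditions for V and W,
   nabla_W ∘ sigma_W = sigma_W, and the two twisting identities for tau. *)

From Stdlib Require Import List.
Import ListNotations.

(** * String diagrams *)

Section StringDiagrams.
Context {C : SMCat}.

Lemma interchange_lr (f g : @Mor C) X Y : dom f = X -> cod g = Y ->
  (f ⊗ idm Y) ∘ (idm X ⊗ g) = f ⊗ g.
Proof.
  intros <- <-. rewrite <- mtens_comp by (rewrite ?cod_idm, ?dom_idm; reflexivity).
  now rewrite comp_idm_r, comp_idm_l.
Qed.

Lemma interchange_rl (f g : @Mor C) X Y : cod f = X -> dom g = Y ->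
  (idm X ⊗ g) ∘ (f ⊗ idm Y) = f ⊗ g.
Proof.
  intros <- <-. rewrite <- mtens_comp by (rewrite ?cod_idm, ?dom_idm; reflexivity).
  now rewrite comp_idm_r, comp_idm_l.
Qed.

Lemma mtens_split (f g : @Mor C) : f ⊗ g = (idm (cod f) ⊗ g) ∘ (f ⊗ idm (dom g)).
Proof. symmetry. now apply interchange_rl. Qed.

Lemma mtens_comp_r (h g f : @Mor C) : cod f = dom g -> h ⊗ (g ∘ f) = (h ⊗ g) ∘ (idm (dom h) ⊗ f).
Proof. intros H. rewrite <- mtens_comp; [now rewrite comp_idm_r | now rewrite cod_idm | exact H]. Qed.

Lemma mtens_comp_l (g f h : @Mor C) : cod f = dom g -> (g ∘ f) ⊗ h = (g ⊗ h) ∘ (f ⊗ idm (dom h)).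
Proof. intros H. rewrite <- mtens_comp; [now rewrite comp_idm_r | exact H | now rewrite cod_idm]. Qed.

Lemma whisker_comp (X Y : @Ob C) f g : cod g = dom f ->
  idm X ⊗ (f ∘ g) ⊗ idm Y = (idm X ⊗ f ⊗ idm Y) ∘ (idm X ⊗ g ⊗ idm Y).
Proof.
  intros H. rewrite mtens_comp_r by exact H.
  rewrite mtens_comp_l by (rewrite cod_mtens, dom_mtens, cod_idm; congruence).
  now rewrite !dom_idm.
Qed.

(* The singleton case avoids a spurious [⊠ unitob] in normal forms. *)
Fixpoint tens_obs (xs : list (@Ob C)) : @Ob C :=
  match xs with
  | [] => unitob
  | x :: xs' => match xs' with [] => x | _ => x ⊠ tens_obs xs' end
  end.

Lemma tens_obs_cons x xs : tens_obs (x :: xs) = x ⊠ tens_obs xs.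
Proof. destruct xs; simpl; [rewrite otens_unit_r|]; reflexivity. Qed.

Lemma tens_obs_app xs ys : tens_obs (xs ++ ys) = tens_obs xs ⊠ tens_obs ys.
Proof.
  induction xs as [|x xs IH]; simpl app.
  - simpl. now rewrite otens_unit_l.
  - now rewrite !tens_obs_cons, IH, otens_assoc.
Qed.

Lemma idm_tens_obs_app xs ys : idm (tens_obs (xs ++ ys)) = idm (tens_obs xs) ⊗ idm (tens_obs ys).
Proof. now rewrite tens_obs_app, mtens_idm. Qed.

(* A layer [mkLayer xs f ds cs ys] stands for [id_xs ⊗ f ⊗ id_ys], where [f : ds -> cs]. *)
Record layer := mkLayer {
  lleft : list (@Ob C); lbox : @Mor C; lsrc : list (@Ob C); ltgt : list (@Ob C); lright : list (@Ob C) }.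

Definition layer_mor (l : layer) : @Mor C := idm (tens_obs (lleft l)) ⊗ lbox l ⊗ idm (tens_obs (lright l)).
Definition layer_dom (l : layer) : list (@Ob C) := lleft l ++ lsrc l ++ lright l.
Definition layer_cod (l : layer) : list (@Ob C) := lleft l ++ ltgt l ++ lright l.
Definition layer_typed (l : layer) : Prop :=
  dom (lbox l) = tens_obs (lsrc l) /\ cod (lbox l) = tens_obs (ltgt l).

(* A diagram is listed from its last layer (codomain) to its first one (domain). *)
Fixpoint diagram (ls : list layer) : @Mor C :=
  match ls with
  | [] => idm unitob
  | l :: ls' => match ls' with [] => layer_mor l | _ => layer_mor l ∘ diagram ls' end
  end.

Fixpoint composable (ls : list layer) : Prop :=
  match ls with
  | l :: ls' => match ls' with [] => True | l' :: _ => layer_cod l' = layer_dom l /\ composable ls' end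
  | [] => True
  end.

Definition well_typed (ls : list layer) : Prop := Forall layer_typed ls /\ composable ls.

Definition unit_layer : layer := mkLayer [] (idm unitob) [] [] [].
Definition diagram_dom (ls : list layer) : list (@Ob C) := layer_dom (last ls unit_layer).
Definition diagram_cod (ls : list layer) : list (@Ob C) := layer_cod (hd unit_layer ls).

Lemma dom_layer_mor l : layer_typed l -> dom (layer_mor l) = tens_obs (layer_dom l).
Proof.
  intros [Hd _]. unfold layer_mor, layer_dom.
  now rewrite !dom_mtens, !dom_idm, Hd, !tens_obs_app, otens_assoc.
Qed.

Lemma cod_layer_mor l : layer_typed l -> cod (layer_mor l) = tens_obs (layer_cod l).
Proof.
  intros [_ Hc]. unfold layer_mor, layer_cod.
  now rewrite !cod_mtens, !cod_idm, Hc, !tens_obs_app, otens_assoc.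
Qed.

Lemma well_typed_tail l ls : well_typed (l :: ls) -> well_typed ls.
Proof. intros [Hf Hc]. inversion Hf; subst. split; auto. destruct ls; simpl in *; tauto. Qed.

Lemma dom_cod_diagram ls : well_typed ls -> ls <> [] ->
  dom (diagram ls) = tens_obs (diagram_dom ls) /\ cod (diagram ls) = tens_obs (diagram_cod ls).
Proof.
  induction ls as [|l ls IH]; intros Hw Hn; [congruence|].
  destruct ls as [|l' ls].
  - destruct Hw as [Hf _]. inversion Hf; subst.
    split; [apply dom_layer_mor | apply cod_layer_mor]; auto.
  - change (diagram (l :: l' :: ls)) with (layer_mor l ∘ diagram (l' :: ls)).
    pose proof (well_typed_tail _ _ Hw) as Hw'.
    destruct Hw as [Hf [Hc _]]. inversion Hf; subst.
    destruct (IH Hw') as [IHd IHc]; [discriminate|].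
    assert (E : cod (diagram (l' :: ls)) = dom (layer_mor l)).
    { rewrite IHc, dom_layer_mor by auto. unfold diagram_cod. simpl. congruence. }
    rewrite dom_comp, cod_comp, cod_layer_mor by auto. now split.
Qed.

Lemma well_typed_app ls1 ls2 : well_typed (ls1 ++ ls2) <->
  well_typed ls1 /\ well_typed ls2 /\ (ls1 <> [] -> ls2 <> [] -> diagram_cod ls2 = diagram_dom ls1).
Proof.
  induction ls1 as [|l ls1 IH].
  - simpl. split; [intros H; split; [split; [constructor | exact I] | split; [exact H | congruence]] | tauto].
  - destruct ls1 as [|l' ls1].
    + destruct ls2 as [|l2 ls2].
      * simpl. split; [intros H; split; [exact H | split; [split; [constructor | exact I] | congruence]] | tauto].
      * unfold well_typed; simpl. split.
        -- intros [Hf [Hc Hch]]. inversion Hf; subst. repeat split; auto.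
        -- intros [[Hf1 _] [[Hf2 Hc2] Hx]]. inversion Hf1; subst. repeat split; auto.
           now apply Hx.
    + change ((l :: l' :: ls1) ++ ls2) with (l :: ((l' :: ls1) ++ ls2)).
      split.
      * intros Hw. pose proof (well_typed_tail _ _ Hw) as Hw'. apply IH in Hw'.
        destruct Hw' as [Hw1 [Hw2 Hx]]. destruct Hw as [Hf [Hc _]]. inversion Hf; subst.
        split; [|split]; auto.
        -- split; [constructor; auto; apply Hw1 | split; [exact Hc | apply Hw1]].
        -- intros _ Hn. apply Hx; auto; discriminate.
      * intros [Hw1 [Hw2 Hx]]. pose proof (well_typed_tail _ _ Hw1) as Hw1'.
        assert (H : well_typed ((l' :: ls1) ++ ls2)).
        { apply IH. split; [|split]; auto. intros _ Hn. apply Hx; auto; discriminate. }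
        destruct Hw1 as [Hf [Hc _]]. inversion Hf; subst.
        split; [constructor; auto; apply H | split; [exact Hc | apply H]].
Qed.

Lemma diagram_app ls1 ls2 : ls1 <> [] -> ls2 <> [] -> well_typed (ls1 ++ ls2) ->
  diagram (ls1 ++ ls2) = diagram ls1 ∘ diagram ls2.
Proof.
  induction ls1 as [|l ls1 IH]; intros H1 H2 Hw; [congruence|].
  destruct ls1 as [|l' ls1].
  - destruct ls2; [congruence | reflexivity].
  - change ((l :: l' :: ls1) ++ ls2) with (l :: ((l' :: ls1) ++ ls2)) in *.
    change (diagram (l :: (l' :: ls1) ++ ls2)) with (layer_mor l ∘ diagram ((l' :: ls1) ++ ls2)).
    change (diagram (l :: l' :: ls1)) with (layer_mor l ∘ diagram (l' :: ls1)).
    pose proof (well_typed_tail _ _ Hw) as Hw'.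
    rewrite IH by (auto; discriminate).
    apply well_typed_app in Hw'. destruct Hw' as [Hw1 [Hw2 Hx]].
    destruct Hw as [Hf [Hc _]]. inversion Hf; subst.
    apply comp_assoc.
    + rewrite (proj2 (dom_cod_diagram _ Hw2 H2)), (proj1 (dom_cod_diagram _ Hw1 ltac:(discriminate))).
      rewrite Hx by (auto; discriminate). reflexivity.
    + rewrite (proj2 (dom_cod_diagram _ Hw1 ltac:(discriminate))), dom_layer_mor by auto.
      unfold diagram_cod. simpl. congruence.
Qed.

Lemma diagram_cod_app ls1 ls2 : ls1 <> [] -> diagram_cod (ls1 ++ ls2) = diagram_cod ls1.
Proof. intros H. destruct ls1; [congruence | reflexivity]. Qed.

Lemma diagram_app_congr_l ls ls' post : ls <> [] -> ls' <> [] ->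
  well_typed (ls ++ post) -> well_typed ls' ->
  diagram_dom ls' = diagram_dom ls -> diagram ls = diagram ls' ->
  diagram (ls ++ post) = diagram (ls' ++ post).
Proof.
  intros H1 H2 Hw Hw' Hd E. destruct post as [|p post].
  - now rewrite !app_nil_r.
  - assert (Hw2 : well_typed (ls' ++ p :: post)).
    { apply well_typed_app in Hw. apply well_typed_app. destruct Hw as [? [? Hx]].
      split; [|split]; auto. intros _ _. rewrite Hd. apply Hx; auto; discriminate. }
    rewrite !diagram_app by (auto; discriminate). now rewrite E.
Qed.

Lemma diagram_app_congr_r pre ls ls' : ls <> [] -> ls' <> [] ->
  well_typed (pre ++ ls) -> well_typed ls' ->
  diagram_cod ls' = diagram_cod ls -> diagram ls = diagram ls' ->
  diagram (pre ++ ls) = diagram (pre ++ ls').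
Proof.
  intros H1 H2 Hw Hw' Hc E. destruct pre as [|p pre].
  - exact E.
  - assert (Hw2 : well_typed ((p :: pre) ++ ls')).
    { apply well_typed_app in Hw. apply well_typed_app. destruct Hw as [? [? Hx]].
      split; [|split]; auto. intros _ _. rewrite Hc. apply Hx; auto; discriminate. }
    rewrite !diagram_app by (auto; discriminate). now rewrite E.
Qed.

Definition whisker (xs ys : list (@Ob C)) (l : layer) : layer :=
  mkLayer (xs ++ lleft l) (lbox l) (lsrc l) (ltgt l) (lright l ++ ys).

Lemma layer_mor_whisker xs ys l :
  layer_mor (whisker xs ys l) = idm (tens_obs xs) ⊗ layer_mor l ⊗ idm (tens_obs ys).
Proof. unfold layer_mor, whisker; simpl. now rewrite !tens_obs_app, <- !mtens_idm, !mtens_assoc. Qed.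

Lemma layer_dom_whisker xs ys l : layer_dom (whisker xs ys l) = xs ++ layer_dom l ++ ys.
Proof. unfold layer_dom, whisker; simpl. now rewrite <- !app_assoc. Qed.

Lemma layer_cod_whisker xs ys l : layer_cod (whisker xs ys l) = xs ++ layer_cod l ++ ys.
Proof. unfold layer_cod, whisker; simpl. now rewrite <- !app_assoc. Qed.

Lemma well_typed_whisker xs ys ls : well_typed ls -> well_typed (map (whisker xs ys) ls).
Proof.
  intros [Hf Hc]. split.
  - apply Forall_map. exact Hf.
  - clear Hf. induction ls as [|l ls IH]; simpl; auto.
    destruct ls as [|l' ls]; simpl; auto. destruct Hc as [H1 H2]. split.
    + rewrite layer_cod_whisker, layer_dom_whisker. congruence.
    + exact (IH H2).
Qed.

Lemma diagram_dom_whisker xs ys ls : ls <> [] ->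
  diagram_dom (map (whisker xs ys) ls) = xs ++ diagram_dom ls ++ ys.
Proof.
  intros Hn. unfold diagram_dom. rewrite <- layer_dom_whisker. f_equal.
  induction ls as [|l ls IH]; [congruence|]. destruct ls as [|l' ls]; [reflexivity|].
  apply IH. discriminate.
Qed.

Lemma diagram_cod_whisker xs ys ls : ls <> [] ->
  diagram_cod (map (whisker xs ys) ls) = xs ++ diagram_cod ls ++ ys.
Proof. intros Hn. destruct ls; [congruence | apply layer_cod_whisker]. Qed.

Lemma diagram_whisker xs ys ls : well_typed ls -> ls <> [] ->
  diagram (map (whisker xs ys) ls) = idm (tens_obs xs) ⊗ diagram ls ⊗ idm (tens_obs ys).
Proof.
  induction ls as [|l ls IH]; intros Hw Hn; [congruence|].
  destruct ls as [|l' ls]; [apply layer_mor_whisker|].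
  change (diagram (map (whisker xs ys) (l :: l' :: ls))) with
    (layer_mor (whisker xs ys l) ∘ diagram (map (whisker xs ys) (l' :: ls))).
  change (diagram (l :: l' :: ls)) with (layer_mor l ∘ diagram (l' :: ls)).
  pose proof (well_typed_tail _ _ Hw) as Hw'.
  rewrite IH by (auto; discriminate).
  rewrite layer_mor_whisker, whisker_comp; [reflexivity|].
  rewrite (proj2 (dom_cod_diagram _ Hw' ltac:(discriminate))).
  destruct Hw as [Hf [Hc _]]. inversion Hf; subst.
  rewrite dom_layer_mor by auto. unfold diagram_cod; simpl. congruence.
Qed.

Lemma diagram_rewrite pre ls ls' post xs ys : ls <> [] -> ls' <> [] ->
  well_typed (pre ++ map (whisker xs ys) ls ++ post) -> well_typed ls -> well_typed ls' ->
  diagram_dom ls' = diagram_dom ls -> diagram_cod ls' = diagram_cod ls ->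
  diagram ls = diagram ls' ->
  diagram (pre ++ map (whisker xs ys) ls ++ post) = diagram (pre ++ map (whisker xs ys) ls' ++ post).
Proof.
  intros H1 H2 Hw Hws Hw' Hd Hc E.
  assert (N1 : map (whisker xs ys) ls <> []) by (destruct ls; simpl; congruence).
  assert (N2 : map (whisker xs ys) ls' <> []) by (destruct ls'; simpl; congruence).
  pose proof (well_typed_whisker xs ys _ Hw') as Hm'.
  pose proof (proj1 (proj2 (proj1 (well_typed_app _ _) Hw))) as Hw1.
  pose proof (proj1 (proj1 (well_typed_app _ _) Hw1)) as Hw1'.
  assert (Hd' : diagram_dom (map (whisker xs ys) ls') = diagram_dom (map (whisker xs ys) ls))
    by (rewrite !diagram_dom_whisker by auto; congruence).
  apply diagram_app_congr_r; auto.
  - intro Hx. apply app_eq_nil in Hx. tauto.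
  - intro Hx. apply app_eq_nil in Hx. tauto.
  - apply well_typed_app. apply well_typed_app in Hw1. destruct Hw1 as [? [? Hx]].
    split; [|split]; auto. intros _ Hp. rewrite Hd'. apply Hx; auto.
  - rewrite !diagram_cod_app by auto. rewrite !diagram_cod_whisker by auto. congruence.
  - apply diagram_app_congr_l; auto.
    rewrite !diagram_whisker by auto. now rewrite E.
Qed.

Lemma diagram_interchange_lr xa f da ca M g db cb yb :
  layer_typed (mkLayer xa f da ca (M ++ cb ++ yb)) ->
  layer_typed (mkLayer (xa ++ da ++ M) g db cb yb) ->
  diagram [mkLayer xa f da ca (M ++ cb ++ yb); mkLayer (xa ++ da ++ M) g db cb yb] =
  diagram [mkLayer (xa ++ ca ++ M) g db cb yb; mkLayer xa f da ca (M ++ db ++ yb)].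
Proof.
  intros [Hdf Hcf] [Hdg Hcg]. simpl in *. unfold layer_mor; simpl.
  rewrite !idm_tens_obs_app, <- !mtens_assoc.
  set (F := idm (tens_obs xa) ⊗ f ⊗ idm (tens_obs M)).
  rewrite (mtens_assoc _ F (idm (tens_obs cb))), (mtens_idm _ (tens_obs cb) (tens_obs yb)).
  rewrite (mtens_assoc _ (idm (tens_obs xa) ⊗ idm (tens_obs da) ⊗ idm (tens_obs M)) g).
  rewrite (mtens_idm _ (tens_obs xa) (tens_obs da)), (mtens_idm _ (tens_obs xa ⊠ tens_obs da) (tens_obs M)).
  rewrite interchange_lr
    by (unfold F; rewrite ?dom_mtens, ?cod_mtens, ?dom_idm, ?cod_idm, ?Hdf, ?Hcg; reflexivity).
  rewrite (mtens_assoc _ F (idm (tens_obs db))), (mtens_idm _ (tens_obs db) (tens_obs yb)).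
  rewrite (mtens_assoc _ (idm (tens_obs xa) ⊗ idm (tens_obs ca) ⊗ idm (tens_obs M)) g).
  rewrite (mtens_idm _ (tens_obs xa) (tens_obs ca)), (mtens_idm _ (tens_obs xa ⊠ tens_obs ca) (tens_obs M)).
  rewrite interchange_rl
    by (unfold F; rewrite ?dom_mtens, ?cod_mtens, ?dom_idm, ?cod_idm, ?Hcf, ?Hdg; reflexivity).
  reflexivity.
Qed.

Lemma diagram_interchange_rl xb g db cb M f da ca ya :
  layer_typed (mkLayer (xb ++ cb ++ M) f da ca ya) ->
  layer_typed (mkLayer xb g db cb (M ++ da ++ ya)) ->
  diagram [mkLayer (xb ++ cb ++ M) f da ca ya; mkLayer xb g db cb (M ++ da ++ ya)] =
  diagram [mkLayer xb g db cb (M ++ ca ++ ya); mkLayer (xb ++ db ++ M) f da ca ya].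
Proof. intros Hf Hg. symmetry. apply diagram_interchange_lr; assumption. Qed.

End StringDiagrams.

Ltac layer_typed_tac := unfold layer_typed; simpl; split; assumption.
Ltac well_typed_tac := cbv [app map whisker lleft lright lbox lsrc ltgt well_typed];
  split; [repeat (apply Forall_cons; [layer_typed_tac|]); apply Forall_nil | simpl; repeat split].

(* [rewrite_at n E] rewrites the goal [diagram l = _] with [E : diagram s = diagram s'],
   applied to the block of layers of [l] starting at position [n]; the tensor context of
   the block is read off by comparing its first layer with the first layer of [s]. *)
Ltac rewrite_at n E :=
  let T := type of E in
  let T := eval cbv [app] in T in
  lazymatch T with diagram ?s = diagram ?s' =>
  lazymatch goal with |- diagram ?l = _ =>
    let k := eval compute in (length s) in
    let pre := eval cbv [firstn] in (firstn n l) in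
    let blk := eval cbv [firstn skipn] in (firstn k (skipn n l)) in
    let post := eval cbv [skipn Nat.add] in (skipn (n + k) l) in
    lazymatch blk with ?a :: _ => lazymatch s with ?b :: _ =>
    let xs := eval cbv [firstn length lleft Nat.sub] in
      (firstn (length (lleft a) - length (lleft b)) (lleft a)) in
    let ys := eval cbv [skipn length lright] in (skipn (length (lright b)) (lright a)) in
    transitivity (diagram (pre ++ map (whisker xs ys) s' ++ post));
    [ change (diagram l) with (diagram (pre ++ map (whisker xs ys) s ++ post));
      apply diagram_rewrite;
      [discriminate | discriminate | well_typed_tac | well_typed_tac | well_typed_tac
      | reflexivity | reflexivity | exact E]
    | cbv [app map whisker lleft lright lbox lsrc ltgt] ]
    end end end end.

(* [slide n] exchanges layers [n] and [n+1] of the goal, which must act on disjoint wires. *)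
Ltac slide n :=
  lazymatch goal with |- diagram ?l = _ =>
    let a := eval cbv [nth] in (nth n l unit_layer) in
    let b := eval cbv [nth] in (nth (S n) l unit_layer) in
    lazymatch a with mkLayer ?xa ?f ?da ?ca ?ya =>
    lazymatch b with mkLayer ?xb ?g ?db ?cb ?yb =>
    lazymatch eval compute in (Nat.leb (length xa + length da) (length xb)) with
    | true =>
      let M := eval cbv [skipn length Nat.add] in (skipn (length xa + length da) xb) in
      rewrite_at n (diagram_interchange_lr xa f da ca M g db cb yb
                      ltac:(layer_typed_tac) ltac:(layer_typed_tac))
    | false =>
      let M := eval cbv [skipn length Nat.add] in (skipn (length xb + length cb) xa) in
      rewrite_at n (diagram_interchange_rl xb g db cb M f da ca ya
                      ltac:(layer_typed_tac) ltac:(layer_typed_tac))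
    end end end end.

(** * The quadruple on V ⊗ W *)

Section TensorQuadruple.
Context {C : SMCat} (A V W : @Ob C) (eta mu psiV sigmaV psiW sigmaW Delta tau : @Mor C).
Context (dom_mu : dom mu = A ⊠ A) (cod_mu : cod mu = A) (dom_eta : dom eta = unitob)
  (cod_eta : cod eta = A) (dom_psiV : dom psiV = V ⊠ A) (cod_psiV : cod psiV = A ⊠ V)
  (dom_sigmaV : dom sigmaV = V ⊠ V) (cod_sigmaV : cod sigmaV = A ⊠ V)
  (dom_psiW : dom psiW = W ⊠ A) (cod_psiW : cod psiW = A ⊠ W)
  (dom_sigmaW : dom sigmaW = W ⊠ W) (cod_sigmaW : cod sigmaW = A ⊠ W)
  (dom_tau : dom tau = W ⊠ V) (cod_tau : cod tau = V ⊠ W)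
  (dom_Delta : dom Delta = V ⊠ W) (cod_Delta : cod Delta = V ⊠ W).

Notation Mu xs ys := (mkLayer xs mu [A;A] [A] ys).
Notation Eta xs ys := (mkLayer xs eta [] [A] ys).
Notation PsiV xs ys := (mkLayer xs psiV [V;A] [A;V] ys).
Notation SigmaV xs ys := (mkLayer xs sigmaV [V;V] [A;V] ys).
Notation PsiW xs ys := (mkLayer xs psiW [W;A] [A;W] ys).
Notation SigmaW xs ys := (mkLayer xs sigmaW [W;W] [A;W] ys).
Notation Tau xs ys := (mkLayer xs tau [W;V] [V;W] ys).
Notation Dlt xs ys := (mkLayer xs Delta [V;W] [V;W] ys).

Context (mu_assoc : mu ∘ (mu ⊗ idm A) = mu ∘ (idm A ⊗ mu))
  (psiV_mu : (mu ⊗ idm V) ∘ (idm A ⊗ psiV) ∘ (psiV ⊗ idm A) = psiV ∘ (idm V ⊗ mu))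
  (psiW_mu : (mu ⊗ idm W) ∘ (idm A ⊗ psiW) ∘ (psiW ⊗ idm A) = psiW ∘ (idm W ⊗ mu))
  (nablaW_sigmaW : nabla A eta mu W psiW ∘ sigmaW = sigmaW)
  (twistedV : twisted_cond A mu V psiV sigmaV)
  (cocycleV : cocycle_cond A mu V psiV sigmaV)
  (twistedW : twisted_cond A mu W psiW sigmaW)
  (cocycleW : cocycle_cond A mu W psiW sigmaW)
  (tau_psi : (psiV ⊗ idm W) ∘ (idm V ⊗ psiW) ∘ (tau ⊗ idm A)
    = (idm A ⊗ tau) ∘ (psiW ⊗ idm V) ∘ (idm W ⊗ psiV))
  (tau_sigma : (mu ⊗ idm V ⊗ idm W) ∘ (idm A ⊗ sigmaV ⊗ idm W) ∘ (psiV ⊗ tau)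
    ∘ (idm V ⊗ sigmaW ⊗ idm V) ∘ (tau ⊗ idm W ⊗ idm V)
  = (mu ⊗ idm V ⊗ idm W) ∘ (idm A ⊗ psiV ⊗ idm W) ∘ (idm A ⊗ idm V ⊗ sigmaW)
    ∘ (idm A ⊗ tau ⊗ idm W) ∘ (psiW ⊗ idm V ⊗ idm W)
    ∘ (idm W ⊗ sigmaV ⊗ idm W) ∘ (idm W ⊗ idm V ⊗ tau)).

Ltac rewrite_types := rewrite ?dom_mu, ?cod_mu, ?dom_eta, ?cod_eta, ?dom_psiV, ?cod_psiV,
  ?dom_sigmaV, ?cod_sigmaV, ?dom_psiW, ?cod_psiW, ?dom_sigmaW, ?cod_sigmaW, ?dom_tau, ?cod_tau,
  ?dom_Delta, ?cod_Delta.
Ltac rewrite_types_in H := rewrite ?dom_mu, ?cod_mu, ?dom_eta, ?cod_eta, ?dom_psiV, ?cod_psiV,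
  ?dom_sigmaV, ?cod_sigmaV, ?dom_psiW, ?cod_psiW, ?dom_sigmaW, ?cod_sigmaW, ?dom_tau, ?cod_tau,
  ?dom_Delta, ?cod_Delta in H.
Ltac solve_types := repeat progress (rewrite ?dom_mtens, ?cod_mtens, ?dom_idm, ?cod_idm;
    rewrite_types; try (rewrite dom_comp by solve_types); try (rewrite cod_comp by solve_types));
  rewrite ?otens_assoc, ?otens_unit_l, ?otens_unit_r; reflexivity.
(* Normal form: right-nested composites of right-nested tensors of generators and
   identities on single objects. *)
Ltac normalize := rewrite_types; rewrite ?otens_assoc, ?otens_unit_l, ?otens_unit_r;
  repeat rewrite <- mtens_idm; rewrite ?mtens_assoc, ?mtens_unit_l, ?mtens_unit_r;
  repeat (rewrite <- comp_assoc by solve_types).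
Ltac normalize_in H := rewrite_types_in H; rewrite ?otens_assoc, ?otens_unit_l, ?otens_unit_r in H;
  repeat rewrite <- mtens_idm in H; rewrite ?mtens_assoc, ?mtens_unit_l, ?mtens_unit_r in H;
  repeat (rewrite <- comp_assoc in H by solve_types).
Ltac as_diagram H := cbv [diagram layer_mor lleft lright lbox tens_obs app];
  let H' := fresh in pose proof H as H';
  unfold twisted_cond, cocycle_cond, nabla in H'; normalize_in H'; normalize; exact H'.

(* The suffix [_d] marks an identity restated as an equation between diagrams. *)
Lemma mu_assoc_d : diagram [Mu [] []; Mu [] [A]] = diagram [Mu [] []; Mu [A] []].
Proof. as_diagram mu_assoc. Qed.
Lemma psiV_mu_d : diagram [Mu [] [V]; PsiV [A] []; PsiV [] [A]] = diagram [PsiV [] []; Mu [V] []].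
Proof. as_diagram psiV_mu. Qed.
Lemma psiW_mu_d : diagram [Mu [] [W]; PsiW [A] []; PsiW [] [A]] = diagram [PsiW [] []; Mu [W] []].
Proof. as_diagram psiW_mu. Qed.
Lemma twistedV_d : diagram [Mu [] [V]; PsiV [A] []; SigmaV [] [A]]
  = diagram [Mu [] [V]; SigmaV [A] []; PsiV [] [V]; PsiV [V] []].
Proof. as_diagram twistedV. Qed.
Lemma twistedW_d : diagram [Mu [] [W]; PsiW [A] []; SigmaW [] [A]]
  = diagram [Mu [] [W]; SigmaW [A] []; PsiW [] [W]; PsiW [W] []].
Proof. as_diagram twistedW. Qed.
Lemma cocycleV_d : diagram [Mu [] [V]; SigmaV [A] []; SigmaV [] [V]]
  = diagram [Mu [] [V]; SigmaV [A] []; PsiV [] [V]; SigmaV [V] []].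
Proof. as_diagram cocycleV. Qed.
Lemma cocycleW_d : diagram [Mu [] [W]; SigmaW [A] []; SigmaW [] [W]]
  = diagram [Mu [] [W]; SigmaW [A] []; PsiW [] [W]; SigmaW [W] []].
Proof. as_diagram cocycleW. Qed.
Lemma nablaW_sigmaW_d : diagram [Mu [] [W]; PsiW [A] []; Eta [A;W] []; SigmaW [] []]
  = diagram [SigmaW [] []].
Proof. as_diagram nablaW_sigmaW. Qed.
Lemma tau_psi_d : diagram [PsiV [] [W]; PsiW [V] []; Tau [] [A]]
  = diagram [Tau [A] []; PsiW [] [V]; PsiV [W] []].
Proof. as_diagram tau_psi. Qed.
Lemma tau_sigma_d :
  diagram [Mu [] [V;W]; SigmaV [A] [W]; Tau [A;V] []; PsiV [] [W;V]; SigmaW [V] [V]; Tau [] [W;V]]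
  = diagram [Mu [] [V;W]; PsiV [A] [W]; SigmaW [A;V] []; Tau [A] [W]; PsiW [] [V;W];
             SigmaV [W] [W]; Tau [W;V] []].
Proof. pose proof tau_sigma as H. rewrite (mtens_split psiV tau) in H. as_diagram H. Qed.

Context (sigma_Delta_l : sigma_tens A mu V W psiV sigmaV sigmaW tau
         = sigma_tens A mu V W psiV sigmaV sigmaW tau ∘ (Delta ⊗ idm (V ⊠ W)))
  (sigma_Delta_r : sigma_tens A mu V W psiV sigmaV sigmaW tau
         = sigma_tens A mu V W psiV sigmaV sigmaW tau ∘ (idm (V ⊠ W) ⊗ Delta))
  (Delta_sigma : sigma_tens A mu V W psiV sigmaV sigmaW tau
         = (idm A ⊗ Delta) ∘ sigma_tens A mu V W psiV sigmaV sigmaW tau).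

Notation sigmaVW_layers := [Mu [] [V;W]; PsiV [A] [W]; SigmaW [A;V] []; SigmaV [] [W;W]; Tau [V] [W]].

Ltac sigma_as_diagram H := let H' := fresh in pose proof H as H';
  unfold sigma_tens in H'; rewrite !(mtens_split sigmaV sigmaW) in H'; as_diagram H'.

Lemma sigma_Delta_l_d : diagram sigmaVW_layers = diagram (sigmaVW_layers ++ [Dlt [] [V;W]]).
Proof. sigma_as_diagram sigma_Delta_l. Qed.
Lemma sigma_Delta_r_d : diagram sigmaVW_layers = diagram (sigmaVW_layers ++ [Dlt [V;W] []]).
Proof. sigma_as_diagram sigma_Delta_r. Qed.
Lemma Delta_sigma_d : diagram sigmaVW_layers = diagram (Dlt [A] [] :: sigmaVW_layers).
Proof. sigma_as_diagram Delta_sigma. Qed.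

(* The [_core] lemmas are the identities for V ⊗ W with the Delta inside psi_{V ⊗ W}
   left out; the cocycle one is split at the uses of the cocycle conditions and of the
   twisting identities. *)
Lemma cocycle_core_cocycleV :
  diagram [Mu [] [V;W]; Mu [A] [V;W]; PsiV [A;A] [W]; SigmaW [A;A;V] []; SigmaV [A] [W;W];
           Tau [A;V] [W]; Mu [] [V;W;V;W]; PsiV [A] [W;V;W]; SigmaW [A;V] [V;W];
           SigmaV [] [W;W;V;W]; Tau [V] [W;V;W]]
  = diagram [Mu [] [V;W]; Mu [] [A;V;W]; PsiV [A;A] [W]; SigmaW [A;A;V] []; SigmaV [A] [W;W];
             PsiV [] [V;W;W]; Mu [V] [V;W;W]; SigmaV [V;A] [W;W]; Tau [V;A;V] [W];
             PsiV [V] [W;V;W]; SigmaW [V;V] [V;W]; Tau [V] [W;V;W]].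
Proof.
  slide 8. rewrite_at 6 twistedV_d. slide 5. slide 6. slide 4. slide 3. slide 2.
  rewrite_at 0 (eq_sym mu_assoc_d). rewrite_at 1 mu_assoc_d. slide 2. slide 3.
  rewrite_at 4 cocycleV_d.
  slide 3. slide 2. rewrite_at 1 (eq_sym mu_assoc_d). slide 2. slide 3. slide 4. slide 8. slide 7.
  rewrite_at 5 psiV_mu_d. reflexivity.
Qed.

Lemma cocycle_core_tau_sigma :
  diagram [Mu [] [V;W]; Mu [] [A;V;W]; PsiV [A;A] [W]; SigmaW [A;A;V] []; SigmaV [A] [W;W];
           PsiV [] [V;W;W]; Mu [V] [V;W;W]; SigmaV [V;A] [W;W]; Tau [V;A;V] [W];
           PsiV [V] [W;V;W]; SigmaW [V;V] [V;W]; Tau [V] [W;V;W]]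
  = diagram [Mu [] [V;W]; Mu [] [A;V;W]; PsiV [A;A] [W]; SigmaW [A;A;V] []; Mu [A] [V;W;W];
             PsiV [A;A] [W;W]; SigmaV [A] [A;W;W]; PsiV [] [V;A;W;W]; SigmaW [V;A;V] [W];
             Tau [V;A] [W;W]; PsiW [V] [V;W;W]; SigmaV [V;W] [W;W]; Tau [V;W;V] [W]].
Proof.
  rewrite_at 6 tau_sigma_d.
  rewrite_at 5 (eq_sym psiV_mu_d). slide 4. slide 3. slide 2. rewrite_at 1 mu_assoc_d.
  slide 2. slide 3. slide 7. rewrite_at 4 (eq_sym twistedV_d). reflexivity.
Qed.

Lemma cocycle_core_cocycleW :
  diagram [Mu [] [V;W]; Mu [] [A;V;W]; PsiV [A;A] [W]; SigmaW [A;A;V] []; Mu [A] [V;W;W];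
           PsiV [A;A] [W;W]; SigmaV [A] [A;W;W]; PsiV [] [V;A;W;W]; SigmaW [V;A;V] [W];
           Tau [V;A] [W;W]; PsiW [V] [V;W;W]; SigmaV [V;W] [W;W]; Tau [V;W;V] [W]]
  = diagram [Mu [] [V;W]; Mu [A] [V;W]; PsiV [A;A] [W]; SigmaW [A;A;V] []; Mu [A] [V;W;W];
             PsiV [A;A] [W;W]; SigmaV [A] [A;W;W]; PsiW [A;V;V] [W]; SigmaW [A;V;V;W] [];
             PsiV [] [V;W;W;W]; Tau [V;A] [W;W]; PsiW [V] [V;W;W]; SigmaV [V;W] [W;W];
             Tau [V;W;V] [W]].
Proof.
  slide 3. slide 4. slide 2. rewrite_at 0 mu_assoc_d. rewrite_at 1 mu_assoc_d.
  rewrite_at 2 psiV_mu_d. slide 6. slide 5.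
  rewrite_at 3 cocycleW_d.
  rewrite_at 2 (eq_sym psiV_mu_d). slide 4. rewrite_at 1 (eq_sym mu_assoc_d).
  slide 2. slide 3. slide 7. slide 6. reflexivity.
Qed.

Lemma cocycle_core_tau_psi :
  diagram [Mu [] [V;W]; Mu [A] [V;W]; PsiV [A;A] [W]; SigmaW [A;A;V] []; Mu [A] [V;W;W];
           PsiV [A;A] [W;W]; SigmaV [A] [A;W;W]; PsiW [A;V;V] [W]; SigmaW [A;V;V;W] [];
           PsiV [] [V;W;W;W]; Tau [V;A] [W;W]; PsiW [V] [V;W;W]; SigmaV [V;W] [W;W];
           Tau [V;W;V] [W]]
  = diagram [Mu [] [V;W]; Mu [A] [V;W]; PsiV [A;A] [W]; SigmaW [A;A;V] []; SigmaV [A] [W;W];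
             Tau [A;V] [W]; PsiV [] [W;V;W]; PsiW [V] [V;W]; Mu [V;W] [V;W]; PsiV [V;W;A] [W];
             SigmaW [V;W;A;V] []; SigmaV [V;W] [W;W]; Tau [V;W;V] [W]].
Proof.
  rewrite_at 4 twistedV_d.
  slide 10. slide 9. rewrite_at 7 tau_psi_d.
  slide 10. slide 9. slide 8. slide 7. slide 3. slide 2.
  rewrite_at 1 mu_assoc_d. rewrite_at 0 (eq_sym mu_assoc_d).
  slide 1. slide 2. slide 3. slide 4. rewrite_at 5 psiV_mu_d.
  slide 6. slide 5. slide 10. slide 9. rewrite_at 7 psiW_mu_d. reflexivity.
Qed.

Lemma twisted_core :
  diagram [Mu [] [V;W]; PsiV [A] [W]; PsiW [A;V] []; Mu [] [V;W;A]; PsiV [A] [W;A];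
           SigmaW [A;V] [A]; SigmaV [] [W;W;A]; Tau [V] [W;A]]
  = diagram [Mu [] [V;W]; Mu [A] [V;W]; PsiV [A;A] [W]; SigmaW [A;A;V] []; SigmaV [A] [W;W];
             Tau [A;V] [W]; PsiV [] [W;V;W]; PsiW [V] [V;W]; PsiV [V;W] [W]; PsiW [V;W;V] []].
Proof.
  slide 2. slide 1. rewrite_at 0 mu_assoc_d. slide 3. rewrite_at 1 psiV_mu_d.
  rewrite_at 2 twistedW_d. rewrite_at 1 (eq_sym psiV_mu_d). slide 3.
  rewrite_at 0 (eq_sym mu_assoc_d). slide 1. slide 2. slide 6. slide 5.
  rewrite_at 3 twistedV_d. slide 8. rewrite_at 6 tau_psi_d.
  slide 5. slide 2. slide 1. rewrite_at 0 mu_assoc_d. reflexivity.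
Qed.

Lemma nabla_sigma_core :
  diagram ([Mu [] [V;W]; PsiV [A] [W]; PsiW [A;V] []; Eta [A;V;W] []] ++ sigmaVW_layers) = diagram sigmaVW_layers.
Proof.
  cbn [app]. slide 3. slide 4. slide 2. slide 1. rewrite_at 0 mu_assoc_d. slide 3.
  rewrite_at 1 psiV_mu_d. rewrite_at 2 nablaW_sigmaW_d. reflexivity.
Qed.

(* With Delta in place: it is moved next to sigma_{V ⊗ W} and absorbed there. *)
Lemma twisted_tens_d :
  diagram [Mu [] [V;W]; PsiV [A] [W]; PsiW [A;V] []; Dlt [A] [A]; Mu [] [V;W;A]; PsiV [A] [W;A];
           SigmaW [A;V] [A]; SigmaV [] [W;W;A]; Tau [V] [W;A]]
  = diagram [Mu [] [V;W]; Mu [A] [V;W]; PsiV [A;A] [W]; SigmaW [A;A;V] []; SigmaV [A] [W;W];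
             Tau [A;V] [W]; PsiV [] [W;V;W]; PsiW [V] [V;W]; Dlt [] [A;V;W]; PsiV [V;W] [W];
             PsiW [V;W;V] []; Dlt [V;W] [A]].
Proof.
  rewrite_at 3 (eq_sym Delta_sigma_d). rewrite_at 3 sigma_Delta_r_d. rewrite_at 3 sigma_Delta_l_d.
  rewrite_at 0 twisted_core. symmetry. slide 8. slide 9. reflexivity.
Qed.

Lemma cocycle_tens_d :
  diagram [Mu [] [V;W]; Mu [A] [V;W]; PsiV [A;A] [W]; SigmaW [A;A;V] []; SigmaV [A] [W;W];
           Tau [A;V] [W]; Mu [] [V;W;V;W]; PsiV [A] [W;V;W]; SigmaW [A;V] [V;W];
           SigmaV [] [W;W;V;W]; Tau [V] [W;V;W]]
  = diagram [Mu [] [V;W]; Mu [A] [V;W]; PsiV [A;A] [W]; SigmaW [A;A;V] []; SigmaV [A] [W;W];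
             Tau [A;V] [W]; PsiV [] [W;V;W]; PsiW [V] [V;W]; Dlt [] [A;V;W]; Mu [V;W] [V;W];
             PsiV [V;W;A] [W]; SigmaW [V;W;A;V] []; SigmaV [V;W] [W;W]; Tau [V;W;V] [W]].
Proof.
  rewrite_at 6 sigma_Delta_l_d.
  rewrite_at 0 cocycle_core_cocycleV. rewrite_at 0 cocycle_core_tau_sigma.
  rewrite_at 0 cocycle_core_cocycleW. rewrite_at 0 cocycle_core_tau_psi.
  symmetry. slide 8. slide 9. slide 10. slide 11. slide 12. reflexivity.
Qed.

Lemma nabla_sigma_tens_d :
  diagram [Mu [] [V;W]; PsiV [A] [W]; PsiW [A;V] []; Dlt [A] [A]; Eta [A;V;W] []; Mu [] [V;W];
           PsiV [A] [W]; SigmaW [A;V] []; SigmaV [] [W;W]; Tau [V] [W]]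
  = diagram sigmaVW_layers.
Proof. slide 3. rewrite_at 4 (eq_sym Delta_sigma_d). exact nabla_sigma_core. Qed.

Ltac of_diagram H :=
  unfold twisted_cond, cocycle_cond, nabla, psi_tens, sigma_tens;
  rewrite ?(mtens_split sigmaV sigmaW);
  repeat (first [rewrite mtens_comp_r by solve_types | rewrite mtens_comp_l by solve_types]);
  rewrite ?dom_mtens, ?cod_mtens, ?dom_idm, ?cod_idm; normalize;
  let H' := fresh in pose proof H as H';
  cbv [diagram layer_mor lleft lright lbox tens_obs app] in H'; normalize_in H'; exact H'.

Lemma tens_quadruple_conditions :
  let psiVW := psi_tens A V W psiV psiW Delta in
  let sigmaVW := sigma_tens A mu V W psiV sigmaV sigmaW tau in
  twisted_cond A mu (V ⊠ W) psiVW sigmaVW /\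
  cocycle_cond A mu (V ⊠ W) psiVW sigmaVW /\
  nabla A eta mu (V ⊠ W) psiVW ∘ sigmaVW = sigmaVW.
Proof.
  cbv zeta. split; [|split].
  - of_diagram twisted_tens_d.
  - of_diagram cocycle_tens_d.
  - of_diagram nabla_sigma_tens_d.
Qed.

End TensorQuadruple.

Theorem mainTheorem2 (C : SMCat) (Hsplit : idempotents_split C)
  (A : @Ob C) (eta mu : @Mor C)
  (V W : @Ob C) (psiV sigmaV psiW sigmaW Delta tau : @Mor C)
  (HqV : is_quadruple A eta mu V psiV sigmaV)
  (HqW : is_quadruple A eta mu W psiW sigmaW)
  (HnV : nabla A eta mu V psiV ∘ sigmaV = sigmaV)
  (HnW : nabla A eta mu W psiW ∘ sigmaW = sigmaW)
  (HtV : twisted_cond A mu V psiV sigmaV)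
  (HcV : cocycle_cond A mu V psiV sigmaV)
  (HtW : twisted_cond A mu W psiW sigmaW)
  (HcW : cocycle_cond A mu W psiW sigmaW)
  (Hlink : is_link_morphism A eta mu V W psiV psiW Delta)
  (Htw : is_twisting_morphism A mu V W psiV sigmaV psiW sigmaW tau)
  (Hs1 : sigma_tens A mu V W psiV sigmaV sigmaW tau
         = sigma_tens A mu V W psiV sigmaV sigmaW tau ∘ (Delta ⊗ idm (V ⊠ W)))
  (Hs2 : sigma_tens A mu V W psiV sigmaV sigmaW tau
         = sigma_tens A mu V W psiV sigmaV sigmaW tau ∘ (idm (V ⊠ W) ⊗ Delta))
  (Hs3 : sigma_tens A mu V W psiV sigmaV sigmaW tau
         = (idm A ⊗ Delta) ∘ sigma_tens A mu V W psiV sigmaV sigmaW tau) :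
  let psiVW := psi_tens A V W psiV psiW Delta in
  let sigmaVW := sigma_tens A mu V W psiV sigmaV sigmaW tau in
  twisted_cond A mu (V ⊠ W) psiVW sigmaVW /\
  cocycle_cond A mu (V ⊠ W) psiVW sigmaVW /\
  nabla A eta mu (V ⊠ W) psiVW ∘ sigmaVW = sigmaVW /\
  weak_crossed_product A mu (V ⊠ W) psiVW sigmaVW.
Proof.
  destruct HqV as [[dom_eta [cod_eta [dom_mu [cod_mu [mu_assoc _]]]]]
                   [dom_psiV [cod_psiV [dom_sigmaV [cod_sigmaV psiV_mu]]]]].
  destruct HqW as [_ [dom_psiW [cod_psiW [dom_sigmaW [cod_sigmaW psiW_mu]]]]].
  destruct Hlink as [dom_Delta [cod_Delta _]].
  destruct Htw as [dom_tau [cod_tau [tau_psi tau_sigma]]].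
  edestruct (tens_quadruple_conditions A V W eta mu psiV sigmaV psiW sigmaW Delta tau)
    as [Htwisted [Hcocycle Hnabla]]; try eassumption.
  repeat split; assumption.
Qed.
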